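(* Let $n\ge1$ and $c\in\mathbb{R}$. For each $L\subsetneqq\Omega_n=\{1,\dots,n\}$ let $\phi_L$ be an arbitrary real-valued function on $F^{n-|L|}$, and let $\phi_{\Omega_n}(\omega)=c$. Define $f$ on the product states of $\mathcal{H}_n=\otimes^n\mathbb{C}^2$ by \[ f(\sigma_J(z))=\sum_{L\subset J}(-1)^{|J-L|}\phi_L(\tau_L(z))\qquad (J\subset\Omega_n,\ z\in F_n). \] Then $\sum_{i=1}^{2^n} f(z_i)=c$ for every unentangled orthonormal basis $z_1,\dots,z_{2^n}$ of $\mathcal{H}_n$.
   Context: One-qubit states are points of $\mathbb{P}^1(\mathbb{C})$, identified with $\mathbb{C}\cup\{\infty\}$ via $(x,y)\mapsto x/y$. Let $\sigma(x,y)=(-\bar y,\bar x)$ on $\mathbb{C}^2$, inducing $\sigma z=-1/\bar z$; $\sigma v$ is the state orthogonal to $v$. $F=\{|z|<1\}\cup\{|z|=1,\operatorname{Im}z>0\}\cup\{1\}$ is a fundamental domain for $\sigma$. Product states of $\mathcal{H}_n$ are $z_1\otimes\cdots\otimes z_n$ with $z_i$ one-qubit states; $F_n$ is the set of those with all $z_i\in F$; $F^m$ is the direct product of $m$ copies of $F$, $F^0=\{\omega\}$. For $J\subset\Omega_n$, $\sigma_J$ applies $\sigma$ in the factors indexed by $J$ and the identity elsewhere; every product state equals $\sigma_J(z)$ for a unique $J$ and $z\in F_n$, so $f$ is well defined. For $z\in F_n$ and $J\ne\Omega_n$ with complement $\{i_1<\dots<i_k\}$, $\tau_J(z)=(z_{i_1},\dots,z_{i_k})$;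 $\tau_{\Omega_n}(z)=\omega$. An unentangled orthonormal basis is an orthonormal basis consisting of product unit vectors. *)

From HB Require Import structures.
From mathcomp Require Import all_boot all_order all_algebra.
From mathcomp Require Import reals complex.
Set Implicit Arguments. Unset Strict Implicit. Unset Printing Implicit Defensive.
Import Order.TTheory GRing.Theory Num.Theory.
Local Open Scope ring_scope.
Local Open Scope complex_scope.

Section Qubits.
Variable R : realType.
Local Notation C := R[i].

(* A point of P^1(C) = C ∪ {∞}: [Some z] is z, [None] is ∞. *)
Definition point := option C.

(* (x,y) |-> x/y, with y = 0 giving ∞ (vector assumed nonzero). *)
Definition pt_of (v : C * C) : point :=
  if v.2 == 0 then None else Some (v.1 / v.2).

Definition sigma (w : point) : point :=
  match w with
  | None => Some 0
  | Some z => if z == 0 then None else Some (- (z^*)^-1)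
  end.

Definition inF (w : point) : bool :=
  match w with
  | None => false
  | Some z => [|| `|z| < 1, (`|z| == 1) && (0 < 'Im z) | z == 1]
  end.

(* H_n = ⊗^n C^2, realized as functions on bit strings {ffun 'I_n -> bool}. *)
Definition Hn (n : nat) := {ffun {ffun 'I_n -> bool} -> C}.

(* Tensor product v_1 ⊗ ... ⊗ v_n of one-qubit vectors v_k = (x_k, y_k):
   coordinate x for bit [false], y for bit [true]. *)
Definition tensor (n : nat) (v : 'I_n -> C * C) : Hn n :=
  [ffun b : {ffun 'I_n -> bool} => \prod_(k < n) (if b k then (v k).2 else (v k).1)].

Definition hdot (n : nat) (u w : Hn n) : C := \sum_b ((u b)^* * w b).

(* tau_L(z): the entries of z indexed by the complement of L, in increasing
   order; for L = Omega_n this is the empty sequence (= omega). *)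
Definition tau (n : nat) (L : {set 'I_n}) (z : 'I_n -> point) : seq point :=
  [seq z k | k <- enum (~: L)].

(* The function f on product states w_1 ⊗ ... ⊗ w_n (w_k ∈ P^1(C)):
   write w = sigma_J(z) with z ∈ F_n (J = indices where w_k ∉ F, z_k = sigma w_k
   there), and f(w) = sum_{L ⊆ J} (-1)^{|J - L|} phi_L(tau_L(z)). *)
Definition fval (n : nat) (phi : {set 'I_n} -> seq point -> R)
    (w : 'I_n -> point) : R :=
  let J := [set k | ~~ inF (w k)] in
  let z := fun k => if inF (w k) then w k else sigma (w k) in
  \sum_(L : {set 'I_n} | L \subset J) (-1) ^+ #|J :\: L| * phi L (tau L z).

End Qubits.

From HB Require Import structures.
From mathcomp Require Import all_boot all_order all_algebra.
From mathcomp Require Import reals complex.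
From mathcomp Require Import ring lra.
Import Order.TTheory GRing.Theory Num.Theory.
Local Open Scope ring_scope.
Set Implicit Arguments. Unset Strict Implicit. Unset Printing Implicit Defensive.

(* Every product state is [sigma_J(z)] for a unique [J] and [z] in [F_n], so
   f(w) = sum_L (prod_(k in L) [w_k notin F] * prod_(k notin L) eps(w_k)) phi_L(tau_L z)
   with eps = +1 on F and -1 off F.  Everything then rests on one identity for an
   unentangled orthonormal basis w_1, ..., w_(2^n): if g_k(x) + g_k(sigma x) = s_k
   for all x, then sum_i prod_k g_k(w_ik) = prod_k s_k.  Summed over a fibre of
   [i |-> tau_L z_i], the coefficient of phi_L is such a sum with s_k = 0 for
   k notin L, so only L = Omega_n survives, and it contributes c.

   For the identity: two orthogonal product states satisfy w_jk = sigma w_ik for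
   some k.  Choose at random, independently for every coordinate k and every class
   {x, sigma x}, one of its two points, x with probability p_k(x) where
   p_k(x) + p_k(sigma x) = 1.  The events "all factors of w_i are chosen" have
   probabilities prod_k p_k(w_ik) and are pairwise disjoint.  For p = 1/2 these
   probabilities add up to 2^n * 2^-n = 1, so every choice is hit by exactly one
   w_i, and the sum is 1 for every p.  Rescaling gives the identity when all
   s_k <> 0, and splitting each g_k in two reduces the general case to that one. *)

Section BigLemmas.
Variable R : comSemiRingType.

Lemma natr_forall (I : finType) (P : pred I) :
  [forall i, P i]%:R = \prod_i (P i)%:R :> R.
Proof.
case: (boolP [forall i, P i]) => [/forallP P_all | /forallPn[i /negPf Pi]].
  by rewrite big1 // => i _; rewrite P_all.
by rewrite (bigD1 i) //= Pi mul0r.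
Qed.

Lemma prod_sum_bool (I : finType) (F : I -> bool -> R) :
  \prod_i (F i true + F i false) = \sum_(f : {ffun I -> bool}) \prod_i F i (f i).
Proof. by rewrite -bigA_distr_bigA; apply: eq_bigr => i _; rewrite big_bool. Qed.

Lemma prod_pair_graph (I J : finType) (c : I -> J) (F : I * J -> R) :
  \prod_(ij : I * J) (if ij.2 == c ij.1 then F ij else 1) = \prod_i F (i, c i).
Proof.
rewrite (eq_bigr (fun ij => if ij.2 == c ij.1 then F (ij.1, ij.2) else 1)) => [|[]//].
rewrite -(pair_bigA _ (fun i j => if j == c i then F (i, j) else 1)).
by apply: eq_bigr => i _; rewrite -big_mkcond big_pred1_eq.
Qed.
End BigLemmas.

Section Fibers.
Variables (I : finType) (K : eqType) (key : I -> K).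

Definition fiber_rep (i : I) : I := odflt i [pick j | key j == key i].

Lemma fiber_rep_key i : key (fiber_rep i) = key i.
Proof. by rewrite /fiber_rep; case: pickP => [j /eqP ->|]. Qed.

Lemma fiber_rep_eq i j : key i = key j -> fiber_rep i = fiber_rep j.
Proof.
by move=> eq_key; rewrite /fiber_rep eq_key; case: pickP => // /(_ j); rewrite eqxx.
Qed.

Lemma sum_fiberwise_eq0 (R : comRingType) (X : I -> R) (F : K -> R) :
  (forall i0, \sum_(i | key i == key i0) X i = 0) ->
  \sum_i X i * F (key i) = 0.
Proof.
move=> X_fiber; rewrite (partition_big fiber_rep xpredT) //=.
apply: big1 => j _; have [j_rep|j_nrep] := eqVneq (fiber_rep j) j.
  rewrite (eq_bigr (fun i => X i * F (key j))) => [|i /eqP <-]; last by rewrite fiber_rep_key.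
  rewrite -mulr_suml (eq_bigl (fun i => key i == key j)) ?X_fiber ?mul0r // => i.
  by apply/eqP/eqP => [<-|/fiber_rep_eq ->]; rewrite ?fiber_rep_key.
apply: big1 => i /eqP ij.
by move: j_nrep; rewrite -ij (fiber_rep_eq (fiber_rep_key i)) eqxx.
Qed.
End Fibers.

Section Involution.
Variables (T : eqType) (flip : T -> T) (side : pred T).
Hypothesis flipK : involutive flip.
Hypothesis side_flip : forall x, side (flip x) = ~~ side x.

Definition flip_if (b : bool) x := if b then flip x else x.

Definition rep x := if side x then x else flip x.

Lemma rep_flip x : rep (flip x) = rep x.
Proof. by rewrite /rep side_flip flipK; case: (side x). Qed.

Lemma flip_if_rep x : flip_if (~~ side x) (rep x) = x.
Proof. by rewrite /rep /flip_if; case: (side x) => /=; rewrite ?flipK. Qed.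

Section OrthogonalFamily.
Variables (R : realFieldType) (n N : nat) (w : 'I_N -> 'I_n -> T).
Hypothesis w_orth : forall i j, i != j -> exists k, w j k = flip (w i k).

(* A choice [beta] picks a point in each class {x, flip x} at each coordinate:
   [beta (k, j)] decides between [rep (w j k)] and its flip, and only the
   representatives [j = rep_index k j] of the classes met by [w] matter. *)
Local Notation choice := {ffun 'I_n * 'I_N -> bool}.

Definition rep_index k i := fiber_rep (fun j => rep (w j k)) i.

Definition selects (beta : choice) i :=
  [forall k, beta (k, rep_index k i) == ~~ side (w i k)].

Lemma selects_inj beta i j : selects beta i -> selects beta j -> i = j.
Proof.
move=> /forallP sel_i /forallP sel_j; apply/eqP/negPn/negP => /w_orth[k wjk].
have same_class : rep_index k j = rep_index k i.
  by apply: fiber_rep_eq; rewrite wjk rep_flip.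
by move: (sel_j k); rewrite same_class (eqP (sel_i k)) wjk side_flip negbK; case: (side _).
Qed.

Lemma sum_selects_le1 beta : \sum_i (selects beta i)%:R <= 1 :> R.
Proof.
case: (pickP (selects beta)) => [i0 sel_i0|no_sel]; last first.
  by rewrite big1 ?ler01 // => i _; rewrite no_sel.
rewrite (bigD1 i0) //= sel_i0 big1 ?addr0 // => i /negPf i_i0.
by case: (boolP (selects beta i)) => // /(selects_inj sel_i0)/eqP; rewrite eq_sym i_i0.
Qed.

Definition weight (p : 'I_n -> T -> R) (beta : choice) :=
  \prod_kj p kj.1 (flip_if (beta kj) (rep (w kj.2 kj.1))).

Section Probabilities.
Variable p : 'I_n -> T -> R.
Hypothesis p_flip : forall k x, p k x + p k (flip x) = 1.

Lemma sum_weight : \sum_beta weight p beta = 1.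
Proof.
rewrite -(prod_sum_bool (fun kj b => p kj.1 (flip_if b (rep (w kj.2 kj.1))))).
by apply: big1 => kj _; rewrite addrC p_flip.
Qed.

Lemma sum_weight_selects i :
  \sum_beta (selects beta i)%:R * weight p beta = \prod_k p k (w i k).
Proof.
pose pinned kj b :=
  (if kj.2 == rep_index kj.1 i then (b == ~~ side (w i kj.1))%:R else 1) *
  p kj.1 (flip_if b (rep (w kj.2 kj.1))).
transitivity (\sum_(beta : choice) \prod_kj pinned kj (beta kj)).
  apply: eq_bigr => beta _; rewrite natr_forall.
  rewrite -(prod_pair_graph (rep_index^~ i)
             (fun kj => (beta kj == ~~ side (w i kj.1))%:R)).
  rewrite -big_split; apply: eq_bigr => kj _; rewrite /pinned; case: ifP => //.
rewrite -prod_sum_bool.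
rewrite -(prod_pair_graph (rep_index^~ i) (fun kj => p kj.1 (w i kj.1))).
apply: eq_bigr => -[k j] _; rewrite /pinned /=; case: eqP => [->|_]; last first.
  by rewrite !mul1r addrC p_flip.
have -> : rep (w (rep_index k i) k) = rep (w i k).
  exact: fiber_rep_key (fun j => rep (w j k)) i.
rewrite -[in RHS](flip_if_rep (w i k)) /flip_if.
by case: (side (w i k)); rewrite /= ?mul1r ?mul0r ?addr0 ?add0r.
Qed.
End Probabilities.

Hypothesis card_w : N = (2 ^ n)%N.

Lemma sum_selects beta : \sum_i (selects beta i)%:R = 1 :> R.
Proof.
pose half (k : 'I_n) (x : T) : R := 2^-1.
have half_flip k x : half k x + half k (flip x) = 1 by rewrite /half; lra.
have weight_gt0 b : 0 < weight half b.
  by apply: prodr_gt0 => kj _; rewrite invr_gt0 ltr0n.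
have defect_eq0 : \sum_b weight half b * (1 - \sum_i (selects b i)%:R) = 0.
  transitivity (\sum_b weight half b - \sum_i \sum_b (selects b i)%:R * weight half b).
    rewrite exchange_big -sumrB; apply: eq_bigr => b _.
    by rewrite mulrBr mulr1 mulr_sumr; congr (_ - _); apply: eq_bigr => i _; rewrite mulrC.
  rewrite (sum_weight half_flip) (eq_bigr _ (fun i _ => sum_weight_selects half_flip i)).
  rewrite /half prodr_const sumr_const !card_ord card_w.
  by rewrite -[_ *+ _]mulr_natl natrX -exprMn divff ?expr1n ?subrr ?pnatr_eq0.
have defect_ge0 b : true -> 0 <= weight half b * (1 - \sum_i (selects b i)%:R).
  by move=> _; rewrite mulr_ge0 ?subr_ge0 ?sum_selects_le1 ?ltW.
move/eqP: (psumr_eq0P defect_ge0 defect_eq0 (i := beta) isT).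
by rewrite mulf_eq0 gt_eqF //= subr_eq0 eq_sym => /eqP.
Qed.

Lemma sum_prod_orth_prob (p : 'I_n -> T -> R) :
  (forall k x, p k x + p k (flip x) = 1) -> \sum_i \prod_k p k (w i k) = 1.
Proof.
move=> p_flip; rewrite -[RHS](sum_weight p_flip).
under eq_bigr => i _ do rewrite -(sum_weight_selects p_flip).
rewrite exchange_big; apply: eq_bigr => beta _.
by rewrite -mulr_suml sum_selects mul1r.
Qed.

Lemma sum_prod_orth_neq0 (g : 'I_n -> T -> R) (s : 'I_n -> R) :
  (forall k x, g k x + g k (flip x) = s k) -> (forall k, s k != 0) ->
  \sum_i \prod_k g k (w i k) = \prod_k s k.
Proof.
move=> g_flip s_neq0.
have p_flip k x : g k x / s k + g k (flip x) / s k = 1 by rewrite -mulrDl g_flip divff.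
rewrite -[RHS]mulr1 -[X in _ * X](sum_prod_orth_prob p_flip) mulr_sumr.
apply: eq_bigr => i _.
by rewrite -big_split; apply: eq_bigr => k _; rewrite /= mulrCA mulfV ?mulr1.
Qed.

Lemma sum_prod_orth (g : 'I_n -> T -> R) (s : 'I_n -> R) :
  (forall k x, g k x + g k (flip x) = s k) ->
  \sum_i \prod_k g k (w i k) = \prod_k s k.
Proof.
(* Split g k = (g k + t k) + (- t k): the two pieces have the nonzero sums
   s k + 2 t k > 0 and - 2 t k < 0. *)
move=> g_flip; pose t k := 1 + `|s k|.
pose G k b x := if b then g k x + t k else - t k.
pose S k b := if b then s k + t k + t k else - t k - t k.
have S_neq0 k b : S k b != 0.
  have := ler_norm (- s k); have := normr_ge0 (s k); rewrite normrN => s_ge0 s_ge.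
  by case: b; rewrite /S /t; [rewrite gt_eqF | rewrite lt_eqF] => //; lra.
transitivity (\sum_i \sum_(f : {ffun 'I_n -> bool}) \prod_k G k (f k) (w i k)).
  apply: eq_bigr => i _; rewrite -(prod_sum_bool (fun k b => G k b (w i k))).
  by apply: eq_bigr => k _; rewrite /G addrK.
rewrite exchange_big /=.
rewrite (eq_bigr (fun f : {ffun 'I_n -> bool} => \prod_k S k (f k))) => [|f _]; last first.
  apply: (@sum_prod_orth_neq0 (fun k => G k (f k))) => [k x|k]; last exact: S_neq0.
  by rewrite /G /S; case: (f k) => //; rewrite addrACA g_flip addrA.
by rewrite -(prod_sum_bool S); apply: eq_bigr => k _; rewrite /S; ring.
Qed.
End OrthogonalFamily.
End Involution.

Section Sigma.
Variable R : realType.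

Lemma sigmaK : involutive (@sigma R).
Proof.
case=> [z|] /=; last by rewrite eqxx.
have [->|z0] := eqVneq z 0; first by [].
rewrite /= oppr_eq0 invr_eq0 conjC_eq0 (negPf z0).
by rewrite rmorphN fmorphV /= conjCK invrN invrK opprK.
Qed.

Lemma inF_Some (a b : R) : inF (Some (a +i* b)%C) =
  (a ^+ 2 + b ^+ 2 < 1) ||
  (a ^+ 2 + b ^+ 2 == 1) && ((0 < b) || (b == 0) && (0 < a)).
Proof.
rewrite /inF normc_def -complexIm /= !ltcR.
have s_ge0 : 0 <= a ^+ 2 + b ^+ 2 by rewrite addr_ge0 ?sqr_ge0.
have -> : (Num.sqrt (a ^+ 2 + b ^+ 2) < 1) = (a ^+ 2 + b ^+ 2 < 1).
  by rewrite -{1}sqrtr1 ltr_sqrt.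
have -> : ((Num.sqrt (a ^+ 2 + b ^+ 2))%:C%C == 1) = (a ^+ 2 + b ^+ 2 == 1).
  rewrite eq_complex /= eqxx andbT -{1}sqrtr1.
  by apply/eqP/eqP => [/eqP|->//]; rewrite eqr_sqrt // => /eqP.
rewrite eq_complex /=.
case: ltrgtP => //= s1.
  by apply/andP => -[/eqP a1 /eqP b0]; move: s1; rewrite a1 b0 expr1n expr0n addr0 ltxx.
congr (_ || _).
apply/andP/andP => [[/eqP -> /eqP ->]|[/eqP b0 a_gt0]]; first by rewrite ltr01.
by rewrite b0 eqxx -(sqrp_eq1 (ltW a_gt0)) -s1 b0 expr0n addr0.
Qed.

Lemma sigma_Some (a b : R) : (a +i* b)%C != 0 ->
  sigma (Some (a +i* b)%C) =
  Some ((- (a / (a ^+ 2 + b ^+ 2))) +i* (- (b / (a ^+ 2 + b ^+ 2))))%C.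
Proof.
move=> z_neq0; rewrite /= (negPf z_neq0).
by congr (Some (Complex _ _)); rewrite ?sqrrN ?mulNr ?opprK.
Qed.

Lemma inF_sigma (w : point R) : inF (sigma w) = ~~ inF w.
Proof.
case: w => [z|]; last by rewrite /= normr0 ltr01.
have [->|z0] := eqVneq z 0; first by rewrite /= eqxx /= normr0 ltr01.
case: z z0 => a b z0; rewrite sigma_Some // !inF_Some.
have s_gt0 : 0 < a ^+ 2 + b ^+ 2.
  rewrite lt_def addr_ge0 ?sqr_ge0 // andbT paddr_eq0 ?sqr_ge0 // !sqrf_eq0.
  by move: z0; rewrite eq_complex negb_and.
set s := a ^+ 2 + b ^+ 2 in s_gt0 *.
have -> : (- (a / s)) ^+ 2 + (- (b / s)) ^+ 2 = s^-1.
  by rewrite /s; field; rewrite -/s gt_eqF.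
case: (ltrgtP s 1) => [s_lt1|s_gt1|->]; rewrite ?invr1 ?mulr1.
- by rewrite invf_lt1 // (lt_gtF s_lt1) invr_eq1 (lt_eqF s_lt1).
- by rewrite invf_lt1 // s_gt1.
- rewrite ltxx eqxx /= !oppr_gt0 oppr_eq0.
  case: (ltrgtP b 0) => //= b0; case: (ltrgtP a 0) => //= a0.
  by move: s_gt0; rewrite /s a0 b0 expr0n addr0 ltxx.
Qed.
End Sigma.

Section Qubits.
Variable R : realType.
Local Notation C := R[i].

Lemma hdot_tensor n (u u' : 'I_n -> C * C) :
  hdot (tensor u) (tensor u') =
  \prod_k (((u k).1)^* * (u' k).1 + ((u k).2)^* * (u' k).2).
Proof.
pose F k b := (if b then (u k).2 else (u k).1)^* * (if b then (u' k).2 else (u' k).1).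
rewrite /hdot (eq_bigr (fun b : {ffun _} => \prod_k F k (b k))) => [|b _]; last first.
  by rewrite !ffunE rmorph_prod -big_split.
by rewrite -prod_sum_bool; apply: eq_bigr => k _; rewrite addrC.
Qed.

Lemma pt_of_orth (u u' : C * C) :
  u != (0, 0) -> u' != (0, 0) -> (u.1)^* * u'.1 + (u.2)^* * u'.2 = 0 ->
  pt_of u' = sigma (pt_of u).
Proof.
case: u u' => x y [x' y']; rewrite !xpair_eqE /pt_of /= => nz nz' orth.
have [y0|y_neq0] := eqVneq y 0.
  have x_neq0 : x != 0 by move: nz; rewrite y0 eqxx andbT.
  have x'0 : x' = 0.
    apply/eqP; move: orth; rewrite y0 rmorph0 mul0r addr0 => /eqP.
    by rewrite mulf_eq0 conjC_eq0 (negPf x_neq0).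
  by move: nz'; rewrite x'0 eqxx /= => /negPf ->; rewrite mul0r.
have [x0|x_neq0] := eqVneq x 0.
  have y'0 : y' = 0.
    apply/eqP; move: orth; rewrite x0 rmorph0 mul0r add0r => /eqP.
    by rewrite mulf_eq0 conjC_eq0 (negPf y_neq0).
  by rewrite y'0 x0 eqxx /= mul0r eqxx.
have y'_neq0 : y' != 0.
  apply: contra nz' => /eqP y'0; rewrite y'0 eqxx andbT.
  move: orth; rewrite y'0 mulr0 addr0 => /eqP.
  by rewrite mulf_eq0 conjC_eq0 (negPf x_neq0).
rewrite (negPf y'_neq0) /= mulf_eq0 invr_eq0 (negPf x_neq0) (negPf y_neq0) /=.
have x'E : x' = - (y^* * y') / x^*.
  have cx_neq0 : x^* != 0 by rewrite conjC_eq0.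
  apply: (mulIf cx_neq0); rewrite divfK // mulrC.
  by apply/eqP; rewrite -addr_eq0 orth.
congr Some; rewrite x'E fmorph_div /=.
by field; rewrite !conjC_eq0 x_neq0 y_neq0 y'_neq0.
Qed.

Lemma orthonormal_tensor_sigma N n (v : 'I_N -> 'I_n -> C * C) :
  (forall i j, hdot (tensor (v i)) (tensor (v j)) = (i == j)%:R) ->
  forall i j, i != j -> exists k, pt_of (v j k) = sigma (pt_of (v i k)).
Proof.
move=> orthonormal.
have v_neq0 i k : v i k != (0, 0).
  apply/eqP => vik0; have := orthonormal i i.
  rewrite eqxx hdot_tensor (bigD1 k) //= vik0 /= !mulr0 addr0 mul0r.
  by move/esym/eqP; rewrite oner_eq0.
move=> i j /negPf ij; have := orthonormal i j.
rewrite ij hdot_tensor => /eqP/prodf_eq0[k _ /eqP orth].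
by exists k; apply: pt_of_orth.
Qed.
End Qubits.

Section ProductStates.
Variable R : realType.
Local Notation rep := (rep (@sigma R) (@inF R)).

Lemma tau_eq n (L : {set 'I_n}) (z z' : 'I_n -> point R) :
  (tau L z == tau L z') = [forall k, (k \notin L) ==> (z k == z' k)].
Proof.
apply/eqP/forallP => [/eq_in_map z_eq k|z_eq].
  by apply/implyP => kL; apply/eqP/z_eq; rewrite mem_enum in_setC.
apply/eq_in_map => k; rewrite mem_enum in_setC => kL.
exact/eqP/(implyP (z_eq k)).
Qed.

Definition fcoef n (L : {set 'I_n}) k (x : point R) : R :=
  if k \in L then (~~ inF x)%:R else (-1) ^+ (~~ inF x).

Lemma fval_expand n (phi : {set 'I_n} -> seq (point R) -> R) (x : 'I_n -> point R) :
  fval phi x = \sum_L (\prod_k fcoef L k (x k)) * phi L (tau L (fun k => rep (x k))).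
Proof.
rewrite /fval big_mkcond /=; apply: eq_bigr => L _; case: ifP => [LJ|/negbT].
  congr (_ * _); rewrite -prodr_const big_mkcond /=; apply: eq_bigr => k _.
  rewrite in_setD in_set /fcoef; case: (boolP (k \in L)) => kL /=.
    by have := subsetP LJ k kL; rewrite in_set => ->.
  by case: (inF (x k)).
case/subsetPn => k kL; rewrite in_set negbK => xkF.
by rewrite (bigD1 k) //= /fcoef kL xkF !mul0r.
Qed.

Section OrthonormalBasis.
Variables (n : nat) (x : 'I_(2 ^ n) -> 'I_n -> point R).
Hypothesis x_orth : forall i j, i != j -> exists k, x j k = sigma (x i k).

Let sum_prod_x := sum_prod_orth (@sigmaK R) (@inF_sigma R) (R := R) x_orth (erefl _).

Lemma sum_fcoef_setT : \sum_i \prod_k fcoef setT k (x i k) = 1.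
Proof.
rewrite (sum_prod_x (s := fun=> 1)) ?big1 // => k y.
by rewrite /fcoef in_setT inF_sigma negbK; case: (inF y); rewrite ?add0r ?addr0.
Qed.

Lemma sum_fcoef_fiber (L : {set 'I_n}) : L != setT -> forall i0,
  \sum_(i | tau L (fun k => rep (x i k)) == tau L (fun k => rep (x i0 k)))
    \prod_k fcoef L k (x i k) = 0.
Proof.
move=> L_neqT i0; have [k0 k0L] : exists k0, k0 \notin L.
  apply/existsP; apply: contraNT L_neqT => /existsPn L_full.
  by apply/eqP/setP => k; rewrite in_setT; apply/negPn.
pose g k y := ((k \notin L) ==> (rep y == rep (x i0 k)))%:R * fcoef L k y.
rewrite big_mkcond /= (eq_bigr (fun i => \prod_k g k (x i k))) => [|i _]; last first.
  by rewrite big_split /= -natr_forall -tau_eq; case: (_ == _); rewrite ?mul1r ?mul0r.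
rewrite (sum_prod_x (s := fun k => (k \in L)%:R)) => [|k y].
  by rewrite (bigD1 k0) //= (negPf k0L) mul0r.
rewrite /g /fcoef (rep_flip (@sigmaK R) (@inF_sigma R)) inF_sigma.
case: (boolP (k \in L)) => kL /=.
  by rewrite !mul1r negbK; case: (inF y); rewrite ?add0r ?addr0.
by case: (_ == _); case: (inF y); rewrite /= ?mul0r ?mul1r ?expr1 ?expr0 ?addNr ?subrr ?addr0.
Qed.

Lemma sum_fval (phi : {set 'I_n} -> seq (point R) -> R) :
  \sum_i fval phi (x i) = phi setT [::].
Proof.
under eq_bigr => i _ do rewrite fval_expand.
rewrite exchange_big (bigD1 setT) //= [X in _ + X]big1 ?addr0 => [|L L_neqT].
  have tauT z : tau setT z = [::] by rewrite /tau setCT enum_set0.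
  by under eq_bigr => i _ do rewrite tauT; rewrite -mulr_suml sum_fcoef_setT mul1r.
exact: (sum_fiberwise_eq0 (key := fun i => tau L (fun k => rep (x i k))) (phi L))
  (sum_fcoef_fiber L_neqT).
Qed.
End OrthonormalBasis.
End ProductStates.

Theorem theorem3 (R : realType) (n : nat) (c : R)
    (phi : {set 'I_n} -> seq (point R) -> R)
    (hn : (0 < n)%N)
    (hphi : phi setT [::] = c)
    (v : 'I_(2 ^ n) -> 'I_n -> R[i] * R[i])
    (horth : forall i j : 'I_(2 ^ n),
        hdot (tensor (v i)) (tensor (v j)) = (i == j)%:R) :
  \sum_(i < 2 ^ n) fval phi (fun k => pt_of (v i k)) = c.
Proof.
by rewrite (sum_fval (orthonormal_tensor_sigma horth)) hphi.
Qed.
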